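(* The meta-algorithm described in the context, with the commitment subroutine \textsc{CommitUnknown} (any parameter $\delta\in(0,1)$), guarantees \[ \sum_{\ell\in\mathcal L^+}R(\ell)\le 2N_{\textsc{F}}+2C. \]
   Context: Robust dynamic pricing: there are $T$ rounds and an unknown valuation $v^\star\in[0,1)$. At each round $t$ the seller posts a price $p_t\in[0,1]$. The true sale indicator is $y_t=\mathbbm 1\{p_t\le v^\star\}$; the seller observes $\sigma_t\in\{0,1\}$, and at most $C$ rounds are corrupted: $|\{t\in[T]:\sigma_t\neq y_t\}|\le C$. Meta-algorithm: let $D=\lceil\log_2 T\rceil$. Consider the complete binary tree of intervals of depth $D$ with root $[0,1)$, where each non-leaf node $[L,R)$ has children $[L,M)$ and $[M,R)$, $M=(L+R)/2$; the depth-$D$ nodes are the leaves, forming the set $\mathcal L$, and $\ell^\star$ is the unique leaf containing $v^\star$. $\mathcal L^+$ is the set of leaves lying above $\ell^\star$ (leaves $[L_\ell,R_\ell)$ with $L_\ell>v^\star$). The algorithm keeps a current node $I$, initially the root, and repeats until the horizon ends: if $I=[L,R)$ is not a leaf, it performs a safety check — post $L$ and observe $\sigma_L$, post $R$ and observe $\sigma_R$; the check fails if $\sigma_L=0$ or $\sigma_R=1$ (by convention the query at $L=0$ and the query at $R=1$ always count as passing). On failure $I$ becomes its parent; otherwise it posts $M$, observes $\sigma_M$, and $I$ becomes $[M,R)$ if $\sigma_M=1$ and $[L,M)$ if $\sigma_M=0$. If $I$ is a leaf, the commitment subroutine is run on $I$; if it returns FAIL, $I$ becomes its parent. \textsc{CommitUnknown}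 with parameter $\delta$: each leaf $\ell$ has a counter $s_\ell$, initialized to $0$ at the start of the horizon and never reset. On leaf $\ell=[L,R)$ it repeats the following two-round block: post $L$ and observe $\sigma_L$; if $\sigma_L=0$ return FAIL. Increase $s_\ell$ by $1$ and sample, independently, $B\sim\mathrm{Bernoulli}(\min\{4\ln(T/\delta)/s_\ell,1\})$. If $B=0$, post $L$ and observe $\sigma_L$, returning FAIL if $\sigma_L=0$; if $B=1$, post $R$ and observe $\sigma_R$, returning FAIL if $\sigma_R=1$. For a leaf $\ell$, $Q(\ell)$ is the set of rounds during which the commitment subroutine runs on $\ell$, and $R(\ell)=\sum_{t\in Q(\ell)}(v^\star-p_t\mathbbm 1\{p_t\le v^\star\})$. $N_{\textsc{F}}$ is the number of times the commitment subroutine returns FAIL on a leaf different from $\ell^\star$. *)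

From mathcomp Require Import all_boot all_order all_algebra.
From mathcomp Require Import all_classical all_reals exp.
Set Implicit Arguments. Unset Strict Implicit. Unset Printing Implicit Defensive.
Import Order.TTheory GRing.Theory Num.Theory.
Local Open Scope ring_scope.

(* Depth of the tree: D = ceil(log2 T) (up_log 2 T, which is 0 for T <= 1). *)
Definition depth (T : nat) : nat := up_log 2 T.

(* Nodes are pairs (d, k) denoting the dyadic interval [k/2^d, (k+1)/2^d). *)
(* Phases of the meta-algorithm at the current node:
   PL          : safety check, about to post L
   PR sL       : safety check, about to post R (sL = whether the L query passed)
   PM          : safety check passed, about to post M
   CFirst      : CommitUnknown, first round of a block (post L)
   CSecond b   : CommitUnknown, second round of a block with sampled B = b *)
Inductive phase := PL | PR of bool | PM | CFirst | CSecond of bool.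

Record state := St {
  sd : nat;
  sk : nat;
  sph : phase;
  scnt : nat -> nat       (* counters s_ell, indexed by leaf index *)
}.

Definition enter (D d k : nat) (s : nat -> nat) : state :=
  St d k (if d == D then CFirst else PL) s.

(* Move to the parent (the root is its own parent, only relevant when D = 0). *)
Definition to_parent (D : nat) (st : state) : state :=
  match sd st with
  | 0 => enter D 0 0 (scnt st)
  | d'.+1 => enter D d' ((sk st) %/ 2) (scnt st)
  end.

Definition price {R : realType} (st : state) : R :=
  let den : R := (2 ^ sd st)%:R in
  let k := sk st in
  match sph st with
  | PL | CFirst | CSecond false => k%:R / den
  | PR _ | CSecond true => k.+1%:R / den
  | PM => (k.*2.+1)%:R / (2 * den)
  end.

Definition commit_fails (st : state) (sg : bool) : bool :=
  match sph st with
  | CFirst => ~~ sg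
  | CSecond b => if b then sg else ~~ sg
  | _ => false
  end.

(* One round of the meta-algorithm with CommitUnknown.  [coin k s] is the
   realization of the Bernoulli variable B sampled on leaf k when its counter
   becomes s (each pair (k, s) is sampled at most once since counters are
   never reset). *)
Definition step (D : nat) (coin : nat -> nat -> bool) (st : state) (sg : bool)
  : state :=
  let d := sd st in let k := sk st in let s := scnt st in
  match sph st with
  | PL => St d k (PR ((k == 0)%N || sg)) s
  | PR okL => if okL && ((k.+1 == 2 ^ d)%N || ~~ sg) then St d k PM s
              else to_parent D st
  | PM => enter D d.+1 (if sg then k.*2.+1 else k.*2) s
  | CFirst =>
      if sg then
        let s' := fun j => if j == k then (s k).+1 else s j in
        St d k (CSecond (coin k (s' k))) s'
      else to_parent D st
  | CSecond b => if commit_fails st sg then to_parent D st else St d k CFirst s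
  end.

(* State at the beginning of round t (rounds are 0, ..., T-1), given the
   observed feedback sequence sigma and the coin realizations. *)
Fixpoint run (D : nat) (coin : nat -> nat -> bool) (sigma : nat -> bool)
  (t : nat) : state :=
  match t with
  | 0 => enter D 0 0 (fun _ => 0%N)
  | t'.+1 => step D coin (run D coin sigma t') (sigma t')
  end.

Definition in_commit (D k : nat) (st : state) : bool :=
  [&& sd st == D, sk st == k &
      match sph st with CFirst | CSecond _ => true | _ => false end].

Definition leaf_contains {R : realType} (D k : nat) (v : R) : bool :=
  (k%:R / (2 ^ D)%:R <= v) && (v < k.+1%:R / (2 ^ D)%:R).

From mathcomp Require Import all_boot all_order all_algebra.
From mathcomp Require Import all_classical all_reals exp.
From mathcomp Require Import zify.
Set Implicit Arguments. Unset Strict Implicit. Unset Printing Implicit Defensive.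
Import Order.TTheory GRing.Theory Num.Theory.
Local Open Scope ring_scope.

(* On a leaf lying above v*, every price posted by the commitment subroutine is
   at least the left end of the leaf, hence exceeds v*: the true feedback is 0
   and the regret of the round is v* < 1.  So the first round of a block on such
   a leaf either returns FAIL, counted by N_F, or observes a corrupted 1, which
   then also pays for the second round of the block.  Taking the number of
   pending second rounds above v* as a potential, the rounds of commitment above
   v* number at most N_F + 2C.  This holds for every realisation of the coins. *)

Lemma sum_le_potential (a b phi : nat -> nat) (n : nat) :
  (forall t, a t + phi t.+1 <= phi t + b t)%N ->
  (\sum_(t < n) a t + phi n <= phi 0 + \sum_(t < n) b t)%N.
Proof.
move=> step_le; elim: n => [|n IH]; first by rewrite !big_ord0 addnC.
rewrite !big_ord_recr /=; move: IH (step_le n).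
set A := (\sum_(t < n) a t)%N; set B := (\sum_(t < n) b t)%N; lia.
Qed.

Section CommitAbove.

Variables (R : realType) (D : nat) (v : R).

Definition commit_phase (ph : phase) : bool :=
  match ph with CFirst | CSecond _ => true | _ => false end.

Definition second_phase (ph : phase) : bool :=
  if ph is CSecond _ then true else false.

Definition above_leaf (k : nat) : bool := v < k%:R / (2 ^ D)%:R.

Definition commit_above (st : state) : bool :=
  [&& sd st == D, above_leaf (sk st) & commit_phase (sph st)].

Definition second_above (st : state) : bool :=
  [&& sd st == D, above_leaf (sk st) & second_phase (sph st)].

Definition fails_off_target (st : state) (sg : bool) : bool :=
  in_commit D (sk st) st && ~~ leaf_contains D (sk st) v && commit_fails st sg.

Definition corrupted (st : state) (sg : bool) : bool := sg != (price st <= v).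

Lemma in_commitE k st :
  in_commit D k st = [&& sd st == D, sk st == k & commit_phase (sph st)].
Proof. by []. Qed.

Lemma price_commit_above st : commit_above st -> v < price st.
Proof.
case: st => d k [|okL|||[]] c; rewrite /commit_above /price /=;
  move=> /and3P[/eqP-> above_k _] //.
apply: (lt_le_trans above_k); rewrite ler_pM2r ?ler_nat //.
by rewrite invr_gt0 ltr0n expn_gt0.
Qed.

Lemma second_above_to_parent st : second_above (to_parent D st) = false.
Proof.
by case: st => [[|d] k ph c]; rewrite /to_parent /second_above /enter /=;
  case: ifP; rewrite !andbF.
Qed.

Lemma second_above_step coin st sg :
  second_above (step D coin st sg) -> [/\ commit_above st, sph st = CFirst & sg].
Proof.
case: st => d k [|okL|||b] c; rewrite /step /=.
- by rewrite /second_above /= !andbF.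
- by case: ifP => _; rewrite ?second_above_to_parent // /second_above /= !andbF.
- by case: sg; rewrite /second_above /enter /=; case: ifP; rewrite !andbF.
- case: sg; last by rewrite second_above_to_parent.
  by rewrite /second_above /commit_above /= !andbT.
- by case: ifP => _; rewrite ?second_above_to_parent // /second_above /= !andbF.
Qed.

Lemma fails_off_target_first st sg :
  commit_above st -> sph st = CFirst -> ~~ sg -> fails_off_target st sg.
Proof.
case/and3P=> /eqP dD; rewrite /above_leaf => above_k _ first_st /negPf sg0.
rewrite /fails_off_target in_commitE dD !eqxx first_st /=.
by rewrite /leaf_contains leNgt above_k /commit_fails first_st sg0.
Qed.

Lemma corrupted_commit_above st : commit_above st -> corrupted st true.
Proof. by move=> /price_commit_above; rewrite /corrupted leNgt => ->. Qed.

Lemma commit_above_potential coin st sg :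
  (commit_above st + second_above (step D coin st sg)
   <= second_above st + (fails_off_target st sg + 2 * corrupted st sg))%N.
Proof.
have [/second_above_step[above_st first_st ->]|_] :=
  boolP (second_above (step D coin st sg)).
  by rewrite above_st corrupted_commit_above // /second_above first_st /= !andbF; lia.
rewrite addn0; have [above_st|//] := boolP (commit_above st).
have first_fails := fails_off_target_first above_st.
case/and3P: (above_st) => dD above_k.
case: st above_st first_fails dD above_k => d k [|okL|||b] c //=
  above_st first_fails dD above_k _.
- by case: sg; [rewrite corrupted_commit_above | rewrite first_fails] => //; lia.
- by rewrite /second_above dD above_k.
Qed.

Lemma count_commit_above coin sigma n :
  (\sum_(t < n) commit_above (run D coin sigma t)
   <= \sum_(t < n) fails_off_target (run D coin sigma t) (sigma t)
      + 2 * \sum_(t < n) corrupted (run D coin sigma t) (sigma t))%N.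
Proof.
set st := run D coin sigma.
have := @sum_le_potential (fun t => commit_above (st t))
  (fun t => fails_off_target (st t) (sigma t) + 2 * corrupted (st t) (sigma t))%N
  (fun t => second_above (st t)) n (fun t => commit_above_potential coin _ _).
have -> : second_above (st 0) = false.
  by rewrite /st /= /second_above /enter /=; case: ifP; rewrite !andbF.
by rewrite big_split -big_distrr /= add0n; apply: leq_trans; apply: leq_addr.
Qed.

Lemma regret_round_le st :
  v < 1 ->
  \sum_(k < 2 ^ D | above_leaf k)
     (if in_commit D k st then v - (if price st <= v then price st else 0) else 0)
  <= (commit_above st : nat)%:R.
Proof.
move=> v_lt1.
have commit_at k : above_leaf k -> in_commit D k st ->
    commit_above st /\ sk st = k.
  move=> above_k; rewrite in_commitE => /and3P[dD /eqP k_eq commit_st].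
  by rewrite /commit_above dD k_eq above_k commit_st.
have [above_st|not_above] := boolP (commit_above st); last first.
  rewrite big1 // => k /commit_at; case: ifP => // _ /(_ isT)[].
  by rewrite (negPf not_above).
have [lt_k|ge_k] := ltnP (sk st) (2 ^ D); last first.
  rewrite big1 // => k /commit_at; case: ifP => // _ /(_ isT)[_ k_eq].
  by move: (ltn_ord k); rewrite -k_eq ltnNge ge_k.
rewrite (bigD1 (Ordinal lt_k)) ?big1 /=.
- rewrite in_commitE eqxx -/(commit_phase _) /=.
  case/and3P: (above_st) => -> _ ->.
  rewrite (leNgt (price st)) (price_commit_above above_st) subr0 addr0.
  exact: ltW.
- move=> k /andP[above_k k_ne]; case: ifP => // /(commit_at _ above_k)[_ k_eq].
  by move: k_ne; rewrite -val_eqE /= k_eq eqxx.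
- by case/and3P: above_st.
Qed.

End CommitAbove.

Theorem lemma5p3 (R : realType) (T C : nat) (delta vstar : R)
  (coin : nat -> nat -> bool) (sigma : nat -> bool) :
  0 < delta < 1 ->
  0 <= vstar < 1 ->
  (* every realized coin lies in the support of Bernoulli(min{4 ln(T/delta)/s, 1}) *)
  (forall k s : nat, (0 < s)%N -> coin k s = false ->
     4 * ln (T%:R / delta) / s%:R < 1) ->
  (* at most C corrupted rounds *)
  (\sum_(t < T)
     (sigma t != (@price R (run (depth T) coin sigma t) <= vstar)%R : nat) <= C)%N ->
  let D := depth T in
  let st t := run D coin sigma t in
  let p t : R := price (st t) in
  (* R(ell) summed over the leaves ell above ell* *)
  \sum_(k < 2 ^ D | vstar < k%:R / (2 ^ D)%:R)
     \sum_(t < T | in_commit D k (st t)) (vstar - (if p t <= vstar then p t else 0))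
  <= 2 * (\sum_(t < T)
            ((in_commit D (sk (st t)) (st t)
              && ~~ leaf_contains D (sk (st t)) vstar
              && commit_fails (st t) (sigma t)) : nat))%:R
     + 2 * C%:R.
Proof.
move=> _ /andP[_ vstar_lt1] _ corruptions_le; cbv beta zeta.
set D := depth T; set st := run D coin sigma.
apply: (@le_trans _ _ (\sum_(t < T) commit_above D vstar (st t) : nat)%:R).
  under eq_bigr do rewrite big_mkcond /=.
  rewrite exchange_big natr_sum; apply: ler_sum => t _.
  exact: regret_round_le.
rewrite -!natrM -natrD ler_nat.
apply: leq_trans (count_commit_above D vstar coin sigma T) _.
by rewrite leq_add ?leq_pmull //; apply: leq_mul.
Qed.
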